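(* Let $k_0\ge 0$ and $c\in\mathbb{R}$ with $|c|<\sqrt{1+k_0^2}$. The circles in $\mathbb{S}^2$ of constant geodesic curvature $k_0$ which are not parallels (i.e. not of the form $\{z=\text{const}\}$) are the only arc-length parametrized spherical curves $\xi=(x,y,z)$ (up to rotations around the $z$-axis) whose spherical angular momentum, as a function of $z$, is $\mathcal K(z)=k_0z+c$.
   Context: For an arc-length parametrized curve $\xi=(x,y,z)$ in the unit sphere $\mathbb{S}^2\subset\mathbb{R}^3$, its spherical angular momentum is $\mathcal K=\dot x\,y-x\,\dot y=-\det(\xi,\dot\xi,(0,0,1))$, where the dot denotes the derivative with respect to arc length; its geodesic curvature is $\kappa=\det(\xi,\dot\xi,\ddot\xi)$. *)

From Stdlib Require Import Reals.
From Coquelicot Require Import Coquelicot.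
Open Scope R_scope.

(* A curve xi = (x,y,z) : I -> R^3 given by its three coordinate functions,
   defined on the open interval I = ]a, b[ with a, b in R ∪ {±oo}. *)
Definition in_I (a b : Rbar) (s : R) : Prop := Rbar_lt a s /\ Rbar_lt s b.

Definition det3 (u v w : R * R * R) : R :=
  let '(u1, u2, u3) := u in
  let '(v1, v2, v3) := v in
  let '(w1, w2, w3) := w in
  u1 * (v2 * w3 - v3 * w2) - u2 * (v1 * w3 - v3 * w1) + u3 * (v1 * w2 - v2 * w1).

Definition xi (x y z : R -> R) (s : R) : R * R * R := (x s, y s, z s).
Definition dxi (x y z : R -> R) (s : R) : R * R * R :=
  (Derive x s, Derive y s, Derive z s).
Definition ddxi (x y z : R -> R) (s : R) : R * R * R :=
  (Derive (Derive x) s, Derive (Derive y) s, Derive (Derive z) s).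

Definition C2_on (a b : Rbar) (f : R -> R) : Prop :=
  forall s, in_I a b s ->
    ex_derive f s /\ ex_derive (Derive f) s /\ continuous (Derive (Derive f)) s.

Definition arclength_spherical_curve (a b : Rbar) (x y z : R -> R) : Prop :=
  C2_on a b x /\ C2_on a b y /\ C2_on a b z /\
  (forall s, in_I a b s -> x s ^ 2 + y s ^ 2 + z s ^ 2 = 1) /\
  (forall s, in_I a b s -> Derive x s ^ 2 + Derive y s ^ 2 + Derive z s ^ 2 = 1).

Definition ang_mom (x y z : R -> R) (s : R) : R :=
  Derive x s * y s - x s * Derive y s.

Definition geod_curv (x y z : R -> R) (s : R) : R :=
  det3 (xi x y z s) (dxi x y z s) (ddxi x y z s).

(* xi lies on a circle of S^2 (intersection of S^2 with the plane <p,n> = d,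
   n a unit vector, |d| < 1) which is not a parallel, i.e. the plane is not
   horizontal ({z = const}), and xi has constant geodesic curvature k0. *)
Definition nonparallel_circle_of_curvature (a b : Rbar) (x y z : R -> R) (k0 : R) : Prop :=
  (exists n1 n2 n3 d : R,
      n1 ^ 2 + n2 ^ 2 + n3 ^ 2 = 1 /\ Rabs d < 1 /\
      ~ (n1 = 0 /\ n2 = 0) /\
      forall s, in_I a b s -> n1 * x s + n2 * y s + n3 * z s = d) /\
  (forall s, in_I a b s -> geod_curv x y z s = k0).

(* z is not constant on any open subinterval of I (so that K can be regarded
   as a function of z) *)
Definition z_nowhere_locally_constant (a b : Rbar) (z : R -> R) : Prop :=
  forall u v, in_I a b u -> in_I a b v -> u < v ->
    exists s, u < s < v /\ Derive z s <> 0.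

From Stdlib Require Import Reals Lra Psatz.
From Coquelicot Require Import Coquelicot.
Open Scope R_scope.

(* For an arc-length parametrized spherical curve, [ξ'' = -ξ + κ (ξ × ξ')], so for every
   constant [k] the vector [A = ξ × ξ' + k ξ] satisfies [A' = (k - κ) ξ'], [|A|^2 = 1 + k^2]
   and [A·ξ = k].  Its third component is [k z - K], hence [(K - k z)' = (κ - k) z'].
   If [K = k0 z + c] and [z] is nowhere locally constant, continuity of [κ] forces
   [κ = k0]; then [A] is constant and [ξ] lies in the plane [A·ξ = k0], which is not
   horizontal because [A_3^2 = c^2 < 1 + k0^2].  Conversely, on a circle of curvature [k0]
   the vector [A] is constant, so [K - k0 z = -A_3] is constant; and [A] is orthogonal to
   [ξ'] and [ξ''], as is the normal of the plane, so [A] is parallel to that normal and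
   thus not vertical, i.e. [A_3^2 < |A|^2 = 1 + k0^2]. *)

Section Interval.

Variables a b : Rbar.

Lemma in_I_nonempty : Rbar_lt a b -> exists s, in_I a b s.
Proof.
  unfold in_I; destruct a as [a'| |], b as [b'| |]; simpl; intros H; try tauto.
  - exists ((a' + b') / 2); lra.
  - exists (a' + 1); lra.
  - exists (b' - 1); lra.
  - exists 0; auto.
Qed.

Lemma locally_in_I s : in_I a b s -> locally s (in_I a b).
Proof.
  apply (open_and (fun u : R => Rbar_lt a u) (fun u : R => Rbar_lt u b)).
  - apply open_Rbar_gt.
  - apply open_Rbar_lt.
Qed.

Lemma in_I_between s t r :
  in_I a b s -> in_I a b t -> Rmin s t <= r <= Rmax s t -> in_I a b r.
Proof.
  unfold in_I, Rmin, Rmax. intros [Has Hsb] [Hat Htb] Hr.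
  destruct (Rle_dec s t); destruct a, b; simpl in *; try tauto; lra.
Qed.

Lemma is_derive_const_in_I (f : R -> R) s l C :
  in_I a b s -> (forall t, in_I a b t -> f t = C) -> is_derive f s l -> l = 0.
Proof.
  intros Hs Hf Hd.
  assert (H0 : is_derive f s 0).
  { apply (is_derive_ext_loc (fun _ => C)); [|apply (is_derive_const C s)].
    apply (filter_imp (in_I a b)); [|now apply locally_in_I].
    intros t Ht. symmetry. auto. }
  apply is_derive_unique in Hd. apply is_derive_unique in H0. congruence.
Qed.

Lemma const_in_I_of_derive0 (f : R -> R) :
  (forall t, in_I a b t -> is_derive f t 0) ->
  forall s t, in_I a b s -> in_I a b t -> f s = f t.
Proof.
  intros Hd s t Hs Ht.
  assert (Hst : forall r, Rmin s t <= r <= Rmax s t -> in_I a b r)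
    by (intros; now apply (in_I_between s t)).
  destruct (MVT_gen f s t (fun _ => 0)) as [r [_ Hr]].
  - intros r Hr. apply Hd, Hst. lra.
  - intros r Hr. apply continuity_pt_filterlim.
    apply (ex_derive_continuous (K := R_AbsRing) (V := R_NormedModule)).
    eexists. now apply Hd, Hst.
  - lra.
Qed.

Lemma continuous_eq0_of_mul_eq0 (g h : R -> R) :
  (forall u v, in_I a b u -> in_I a b v -> u < v -> exists s, u < s < v /\ h s <> 0) ->
  (forall s, in_I a b s -> continuity_pt g s) ->
  (forall s, in_I a b s -> g s * h s = 0) ->
  forall s, in_I a b s -> g s = 0.
Proof.
  intros Hh Hg Hgh s Hs.
  destruct (Req_dec (g s) 0) as [E|E]; [exact E|exfalso].
  assert (eps : 0 < Rabs (g s)) by now apply Rabs_pos_lt.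
  assert (Hnear := Hg s Hs). apply continuity_pt_filterlim in Hnear.
  apply filterlim_locally with (eps := mkposreal _ eps) in Hnear.
  destruct (filter_and _ _ Hnear (locally_in_I s Hs)) as [del Hdel].
  assert (Hball : forall t, s - del / 2 <= t <= s + del / 2 ->
            ball (g s) (Rabs (g s)) (g t) /\ in_I a b t).
  { intros t Ht. apply Hdel. change (Rabs (t - s) < del).
    pose proof (cond_pos del). apply Rabs_def1; lra. }
  pose proof (cond_pos del).
  destruct (Hh (s - del / 2) (s + del / 2)) as [t [Ht Hht]];
    [apply Hball; lra | apply Hball; lra | lra |].
  destruct (Hball t ltac:(lra)) as [Hb Hti].
  change (Rabs (g t - g s) < Rabs (g s)) in Hb.
  assert (Hgt : g t = 0).
  { destruct (Rmult_integral _ _ (Hgh t Hti)); tauto. }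
  rewrite Hgt, Rminus_0_l, Rabs_Ropp in Hb. lra.
Qed.

End Interval.

Definition dot (u v : R * R * R) : R :=
  let '(u1, u2, u3) := u in let '(v1, v2, v3) := v in u1 * v1 + u2 * v2 + u3 * v3.

Definition cross (u v : R * R * R) : R * R * R :=
  let '(u1, u2, u3) := u in let '(v1, v2, v3) := v in
  (u2 * v3 - u3 * v2, u3 * v1 - u1 * v3, u1 * v2 - u2 * v1).

Definition scal3 (r : R) (u : R * R * R) : R * R * R :=
  let '(u1, u2, u3) := u in (r * u1, r * u2, r * u3).

Definition circle_axis (k : R) (u v : R * R * R) : R * R * R :=
  let '(n1, n2, n3) := cross u v in let '(u1, u2, u3) := u in
  (n1 + k * u1, n2 + k * u2, n3 + k * u3).

Lemma dot_comm (u v : R * R * R) : dot u v = dot v u.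
Proof. destruct u as [[u1 u2] u3], v as [[v1 v2] v3]; cbn [dot]. ring. Qed.

Lemma triple_eq_of_dot (u v : R * R * R) : (forall n, dot n u = dot n v) -> u = v.
Proof.
  destruct u as [[u1 u2] u3], v as [[v1 v2] v3]; intros H.
  assert (H1 := H (1, 0, 0)). assert (H2 := H (0, 1, 0)). assert (H3 := H (0, 0, 1)).
  cbn [dot] in H1, H2, H3. f_equal; [f_equal|]; lra.
Qed.

Lemma cross_acceleration (u v w : R * R * R) :
  dot u u = 1 -> dot v v = 1 -> dot u v = 0 -> dot u w = -1 -> dot v w = 0 ->
  cross u w = scal3 (- det3 u v w) v /\ dot w w = 1 + det3 u v w ^ 2.
Proof.
  destruct u as [[u1 u2] u3], v as [[v1 v2] v3], w as [[w1 w2] w3].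
  cbn [dot cross scal3 det3]. intros Hu Hv Huv Huw Hvw.
  set (k := u1 * (v2 * w3 - v3 * w2) - u2 * (v1 * w3 - v3 * w1) + u3 * (v1 * w2 - v2 * w1)).
  set (e1 := u2 * w3 - u3 * w2 + k * v1).
  set (e2 := u3 * w1 - u1 * w3 + k * v2).
  set (e3 := u1 * w2 - u2 * w1 + k * v3).
  (* [k * k] is the Gram determinant of [u, v, w]. *)
  assert (Hk : k * k = w1 * w1 + w2 * w2 + w3 * w3 - 1).
  { transitivity ((u1*u1+u2*u2+u3*u3) * (v1*v1+v2*v2+v3*v3) * (w1*w1+w2*w2+w3*w3)
      + 2 * (u1*v1+u2*v2+u3*v3) * (v1*w1+v2*w2+v3*w3) * (u1*w1+u2*w2+u3*w3)
      - (u1*u1+u2*u2+u3*u3) * (v1*w1+v2*w2+v3*w3) ^ 2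
      - (v1*v1+v2*v2+v3*v3) * (u1*w1+u2*w2+u3*w3) ^ 2
      - (w1*w1+w2*w2+w3*w3) * (u1*v1+u2*v2+u3*v3) ^ 2).
    - unfold k; ring.
    - rewrite Hu, Hv, Huv, Huw, Hvw. ring. }
  (* [(e1, e2, e3) = u × w + k v]; Lagrange's identity and [(u × w)·v = -k] give its norm. *)
  assert (He : e1 ^ 2 + e2 ^ 2 + e3 ^ 2 = 0).
  { transitivity ((u1*u1+u2*u2+u3*u3) * (w1*w1+w2*w2+w3*w3) - (u1*w1+u2*w2+u3*w3) ^ 2
      - 2 * k * k + k * k * (v1*v1+v2*v2+v3*v3)).
    - unfold e1, e2, e3, k; ring.
    - rewrite Hu, Hv, Huw. nra. }
  assert (E1 : e1 = 0) by nra. assert (E2 : e2 = 0) by nra. assert (E3 : e3 = 0) by nra.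
  unfold e1, e2, e3 in *. split; [f_equal; [f_equal|] |]; lra.
Qed.

Lemma circle_axis_dot (k : R) (u v : R * R * R) :
  dot u u = 1 -> dot v v = 1 -> dot u v = 0 ->
  dot (circle_axis k u v) (circle_axis k u v) = 1 + k ^ 2 /\
  dot (circle_axis k u v) u = k /\ dot (circle_axis k u v) v = 0.
Proof.
  destruct u as [[u1 u2] u3], v as [[v1 v2] v3]; cbn [dot cross circle_axis].
  intros Hu Hv Huv.
  split; [|split].
  - transitivity ((u1*u1+u2*u2+u3*u3) * (v1*v1+v2*v2+v3*v3) - (u1*v1+u2*v2+u3*v3) ^ 2
      + k ^ 2 * (u1*u1+u2*u2+u3*u3)); [ring|].
    rewrite Hu, Hv, Huv. ring.
  - transitivity (k * (u1*u1+u2*u2+u3*u3)); [ring|]. rewrite Hu. ring.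
  - transitivity (k * (u1*v1+u2*v2+u3*v3)); [ring|]. rewrite Huv. ring.
Qed.

Lemma circle_axis_dot_det3 (k : R) (u v w : R * R * R) :
  dot (circle_axis k u v) w = det3 u v w + k * dot u w.
Proof.
  destruct u as [[u1 u2] u3], v as [[v1 v2] v3], w as [[w1 w2] w3].
  cbn [dot cross circle_axis det3]. ring.
Qed.

Lemma horizontal_basis_orthogonal (u1 u2 w1 w2 n1 n2 : R) :
  u1 * u1 + u2 * u2 = 1 -> u1 * w1 + u2 * w2 = 0 -> w1 * w1 + w2 * w2 <> 0 ->
  n1 * u1 + n2 * u2 = 0 -> n1 * w1 + n2 * w2 = 0 -> n1 = 0 /\ n2 = 0.
Proof.
  intros Hu Huw Hw Hnu Hnw.
  set (D := u1 * w2 - u2 * w1).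
  assert (HD : D * D <> 0).
  { replace (D * D) with ((u1 * u1 + u2 * u2) * (w1 * w1 + w2 * w2) - (u1 * w1 + u2 * w2) ^ 2)
      by (unfold D; ring).
    rewrite Hu, Huw. intros H. apply Hw. lra. }
  assert (H1 : n1 * D = w2 * (n1 * u1 + n2 * u2) - u2 * (n1 * w1 + n2 * w2)) by (unfold D; ring).
  assert (H2 : n2 * D = u1 * (n1 * w1 + n2 * w2) - w1 * (n1 * u1 + n2 * u2)) by (unfold D; ring).
  rewrite Hnu, Hnw in H1, H2.
  assert (HD0 : D <> 0) by (intros H0; apply HD; rewrite H0; ring).
  split; apply (Rmult_eq_reg_r D); trivial; lra.
Qed.

Lemma Rabs_lt_sqrt_iff (c L : R) : Rabs c < sqrt L <-> c ^ 2 < L.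
Proof.
  rewrite <- sqrt_Rsqr_abs. unfold Rsqr. split; intros H.
  - apply sqrt_lt_0_alt in H. lra.
  - apply sqrt_lt_1_alt. nra.
Qed.

Lemma plane_of_axis (k : R) (A : R * R * R) :
  dot A A = 1 + k ^ 2 -> snd A ^ 2 < 1 + k ^ 2 ->
  exists n1 n2 n3 d : R,
    n1 ^ 2 + n2 ^ 2 + n3 ^ 2 = 1 /\ Rabs d < 1 /\ ~ (n1 = 0 /\ n2 = 0) /\
    forall p1 p2 p3, dot A (p1, p2, p3) = k -> n1 * p1 + n2 * p2 + n3 * p3 = d.
Proof.
  destruct A as [[A1 A2] A3]; cbn [dot snd]. intros HA HA3.
  set (L := sqrt (1 + k ^ 2)).
  assert (HL : 0 < L) by (apply sqrt_lt_R0; nra).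
  assert (HL2 : L * L = 1 + k ^ 2) by (apply sqrt_sqrt; nra).
  exists (A1 / L), (A2 / L), (A3 / L), (k / L). split; [|split; [|split]].
  - replace ((A1 / L) ^ 2 + (A2 / L) ^ 2 + (A3 / L) ^ 2)
      with ((A1 * A1 + A2 * A2 + A3 * A3) / (L * L)) by (field; lra).
    rewrite HA, HL2. field. nra.
  - rewrite <- sqrt_1. apply Rabs_lt_sqrt_iff.
    replace ((k / L) ^ 2) with (k ^ 2 / (L * L)) by (field; lra).
    rewrite HL2. apply Rmult_lt_reg_r with (1 + k ^ 2); [nra|].
    field_simplify; nra.
  - intros [H1 H2].
    assert (A1 = 0) by (replace A1 with (A1 / L * L) by (field; lra); rewrite H1; ring).
    assert (A2 = 0) by (replace A2 with (A2 / L * L) by (field; lra); rewrite H2; ring).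
    subst. lra.
  - intros p1 p2 p3 Hp. rewrite <- Hp. field. lra.
Qed.


Lemma is_derive_dot_const (n : R * R * R) (f g h : R -> R) s :
  ex_derive f s -> ex_derive g s -> ex_derive h s ->
  is_derive (fun t => dot n (xi f g h t)) s (dot n (dxi f g h s)).
Proof.
  destruct n as [[n1 n2] n3]; unfold xi, dxi; cbn [dot]. intros Hf Hg Hh.
  auto_derive; [tauto|].
  (* [set] also captures the eta-expanded [Derive (fun t => f t) s] left by [auto_derive],
     which [ring] would otherwise treat as a different atom. *)
  set (df := Derive f s). set (dg := Derive g s). set (dh := Derive h s). ring.
Qed.

Lemma is_derive_dot (f g h f' g' h' : R -> R) s :
  ex_derive f s -> ex_derive g s -> ex_derive h s ->
  ex_derive f' s -> ex_derive g' s -> ex_derive h' s ->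
  is_derive (fun t => dot (xi f g h t) (xi f' g' h' t)) s
    (dot (dxi f g h s) (xi f' g' h' s) + dot (xi f g h s) (dxi f' g' h' s)).
Proof.
  unfold xi, dxi; cbn [dot]. intros.
  auto_derive; [tauto|].
  set (df := Derive f s). set (dg := Derive g s). set (dh := Derive h s).
  set (df' := Derive f' s). set (dg' := Derive g' s). set (dh' := Derive h' s). ring.
Qed.

Section ArcLengthSphericalCurve.

Variables (a b : Rbar) (x y z : R -> R).
Hypothesis Hxi : arclength_spherical_curve a b x y z.

Lemma ex_derive_xi s : in_I a b s ->
  ex_derive x s /\ ex_derive y s /\ ex_derive z s /\
  ex_derive (Derive x) s /\ ex_derive (Derive y) s /\ ex_derive (Derive z) s.
Proof.
  intros Hs. destruct Hxi as [Cx [Cy [Cz _]]].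
  destruct (Cx s Hs) as [? [? _]], (Cy s Hs) as [? [? _]], (Cz s Hs) as [? [? _]].
  tauto.
Qed.

Lemma dot_xi_xi s : in_I a b s -> dot (xi x y z s) (xi x y z s) = 1.
Proof.
  intros Hs. destruct Hxi as [_ [_ [_ [Hsph _]]]].
  rewrite <- (Hsph s Hs). cbn [dot xi]. ring.
Qed.

Lemma dot_dxi_dxi s : in_I a b s -> dot (dxi x y z s) (dxi x y z s) = 1.
Proof.
  intros Hs. destruct Hxi as [_ [_ [_ [_ Hunit]]]].
  rewrite <- (Hunit s Hs). cbn [dot dxi]. ring.
Qed.

Lemma dot_xi_dxi s : in_I a b s -> dot (xi x y z s) (dxi x y z s) = 0.
Proof.
  intros Hs.
  assert (H : dot (dxi x y z s) (xi x y z s) + dot (xi x y z s) (dxi x y z s) = 0).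
  { apply (is_derive_const_in_I a b (fun t => dot (xi x y z t) (xi x y z t)) s _ 1 Hs dot_xi_xi).
    apply is_derive_dot; apply ex_derive_xi; exact Hs. }
  rewrite dot_comm in H. lra.
Qed.

Lemma dot_dxi_ddxi s : in_I a b s -> dot (dxi x y z s) (ddxi x y z s) = 0.
Proof.
  intros Hs.
  assert (H : dot (ddxi x y z s) (dxi x y z s) + dot (dxi x y z s) (ddxi x y z s) = 0).
  { apply (is_derive_const_in_I a b (fun t => dot (dxi x y z t) (dxi x y z t)) s _ 1 Hs
      dot_dxi_dxi).
    apply (is_derive_dot (Derive x) (Derive y) (Derive z)); apply ex_derive_xi; exact Hs. }
  rewrite dot_comm in H. lra.
Qed.

Lemma dot_xi_ddxi s : in_I a b s -> dot (xi x y z s) (ddxi x y z s) = -1.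
Proof.
  intros Hs.
  assert (H : dot (dxi x y z s) (dxi x y z s) + dot (xi x y z s) (ddxi x y z s) = 0).
  { apply (is_derive_const_in_I a b (fun t => dot (xi x y z t) (dxi x y z t)) s _ 0 Hs
      dot_xi_dxi).
    apply (is_derive_dot x y z (Derive x) (Derive y) (Derive z)); apply ex_derive_xi; exact Hs. }
  rewrite dot_dxi_dxi in H by exact Hs. lra.
Qed.

Lemma cross_xi_ddxi s : in_I a b s ->
  cross (xi x y z s) (ddxi x y z s) = scal3 (- geod_curv x y z s) (dxi x y z s) /\
  dot (ddxi x y z s) (ddxi x y z s) = 1 + geod_curv x y z s ^ 2.
Proof.
  intros Hs. apply cross_acceleration.
  - now apply dot_xi_xi.
  - now apply dot_dxi_dxi.
  - now apply dot_xi_dxi.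
  - now apply dot_xi_ddxi.
  - now apply dot_dxi_ddxi.
Qed.

Lemma geod_curv_continuous s : in_I a b s -> continuity_pt (geod_curv x y z) s.
Proof.
  intros Hs.
  assert (Hcont : forall f, ex_derive f s -> continuity_pt f s).
  { intros f Hf. apply continuity_pt_filterlim.
    now apply (ex_derive_continuous (K := R_AbsRing) (V := R_NormedModule)). }
  destruct (ex_derive_xi s Hs) as [dx [dy [dz [ddx [ddy ddz]]]]].
  apply Hcont in dx, dy, dz, ddx, ddy, ddz.
  destruct Hxi as [Cx [Cy [Cz _]]].
  destruct (Cx s Hs) as [_ [_ cx]], (Cy s Hs) as [_ [_ cy]], (Cz s Hs) as [_ [_ cz]].
  apply continuity_pt_filterlim in cx, cy, cz.
  change (continuity_pt (fun t =>
       x t * (Derive y t * Derive (Derive z) t - Derive z t * Derive (Derive y) t)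
     - y t * (Derive x t * Derive (Derive z) t - Derive z t * Derive (Derive x) t)
     + z t * (Derive x t * Derive (Derive y) t - Derive y t * Derive (Derive x) t)) s).
  repeat first [apply continuity_pt_minus | apply continuity_pt_plus
               | apply continuity_pt_mult | assumption].
Qed.

Lemma is_derive_circle_axis (n : R * R * R) (k : R) s : in_I a b s ->
  is_derive (fun t => dot n (circle_axis k (xi x y z t) (dxi x y z t))) s
    ((k - geod_curv x y z s) * dot n (dxi x y z s)).
Proof.
  intros Hs. destruct (ex_derive_xi s Hs) as [dx [dy [dz [ddx [ddy ddz]]]]].
  destruct (cross_xi_ddxi s Hs) as [Hcross _].
  destruct n as [[n1 n2] n3]. unfold xi, dxi, ddxi in *.
  cbn [dot cross scal3 circle_axis] in *. injection Hcross as H1 H2 H3.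
  auto_derive; [tauto|].
  set (x' := Derive x s) in *. set (y' := Derive y s) in *. set (z' := Derive z s) in *.
  set (x'' := Derive (Derive x) s) in *. set (y'' := Derive (Derive y) s) in *.
  set (z'' := Derive (Derive z) s) in *.
  transitivity (n1 * (y s * z'' - z s * y'' + k * x') + n2 * (z s * x'' - x s * z'' + k * y')
    + n3 * (x s * y'' - y s * x'' + k * z')); [ring|].
  rewrite H1, H2, H3. ring.
Qed.

Lemma circle_axis_const (k : R) :
  (forall s, in_I a b s -> geod_curv x y z s = k) ->
  forall s t, in_I a b s -> in_I a b t ->
  circle_axis k (xi x y z s) (dxi x y z s) = circle_axis k (xi x y z t) (dxi x y z t).
Proof.
  intros Hk s t Hs Ht. apply triple_eq_of_dot. intros n.
  apply (const_in_I_of_derive0 a b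
           (fun r => dot n (circle_axis k (xi x y z r) (dxi x y z r)))); [|exact Hs|exact Ht].
  intros r Hr.
  replace 0 with ((k - geod_curv x y z r) * dot n (dxi x y z r)) by (rewrite Hk by exact Hr; ring).
  now apply is_derive_circle_axis.
Qed.

Lemma ang_mom_circle_axis (k : R) s :
  ang_mom x y z s = k * z s - snd (circle_axis k (xi x y z s) (dxi x y z s)).
Proof. unfold ang_mom, xi, dxi. cbn [circle_axis cross snd]. ring. Qed.

Lemma curvature_eq_of_ang_mom_linear (k c : R) :
  z_nowhere_locally_constant a b z ->
  (forall s, in_I a b s -> ang_mom x y z s = k * z s + c) ->
  forall s, in_I a b s -> geod_curv x y z s = k.
Proof.
  intros Hz HK s Hs. apply Rminus_diag_uniq.
  apply (continuous_eq0_of_mul_eq0 a b (fun t => geod_curv x y z t - k) (Derive z) Hz);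
    [| |exact Hs].
  - intros t Ht. apply continuity_pt_minus; [now apply geod_curv_continuous|].
    now apply continuity_pt_const.
  - intros t Ht.
    assert (H : (k - geod_curv x y z t) * dot (0, 0, 1) (dxi x y z t) = 0).
    { apply (is_derive_const_in_I a b
        (fun r => dot (0, 0, 1) (circle_axis k (xi x y z r) (dxi x y z r))) t _ (- c) Ht);
        [|now apply is_derive_circle_axis].
      intros r Hr. specialize (HK r Hr). rewrite (ang_mom_circle_axis k) in HK.
      destruct (circle_axis k (xi x y z r) (dxi x y z r)) as [[A1 A2] A3].
      cbn [dot snd] in *. lra. }
    cbn [dot dxi] in H. lra.
Qed.

Lemma circle_axis_dot_xi (k : R) s : in_I a b s ->
  dot (circle_axis k (xi x y z s) (dxi x y z s)) (circle_axis k (xi x y z s) (dxi x y z s))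
    = 1 + k ^ 2 /\
  dot (circle_axis k (xi x y z s) (dxi x y z s)) (xi x y z s) = k /\
  dot (circle_axis k (xi x y z s) (dxi x y z s)) (dxi x y z s) = 0.
Proof.
  intros Hs. apply circle_axis_dot.
  - now apply dot_xi_xi.
  - now apply dot_dxi_dxi.
  - now apply dot_xi_dxi.
Qed.

Lemma circle_axis_not_vertical (k n1 n2 n3 d : R) s :
  in_I a b s -> geod_curv x y z s = k -> ~ (n1 = 0 /\ n2 = 0) ->
  (forall t, in_I a b t -> n1 * x t + n2 * y t + n3 * z t = d) ->
  snd (circle_axis k (xi x y z s) (dxi x y z s)) ^ 2 < 1 + k ^ 2.
Proof.
  intros Hs Hk Hn Hplane.
  (* If [A] were vertical, [ξ'] and [ξ''] would span the horizontal plane, and the normal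
     of the plane of [ξ], being orthogonal to both, would be vertical. *)
  assert (Hn_dxi : forall t, in_I a b t -> dot (n1, n2, n3) (dxi x y z t) = 0).
  { intros t Ht.
    apply (is_derive_const_in_I a b (fun r => dot (n1, n2, n3) (xi x y z r)) t _ d Ht Hplane).
    apply is_derive_dot_const; apply ex_derive_xi; exact Ht. }
  assert (Hn_ddxi : dot (n1, n2, n3) (ddxi x y z s) = 0).
  { apply (is_derive_const_in_I a b (fun r => dot (n1, n2, n3) (dxi x y z r)) s _ 0 Hs Hn_dxi).
    apply (is_derive_dot_const _ (Derive x) (Derive y) (Derive z)); apply ex_derive_xi; exact Hs. }
  specialize (Hn_dxi s Hs).
  destruct (circle_axis_dot_xi k s Hs) as [HAA [_ HA_dxi]].
  assert (HA_ddxi : dot (circle_axis k (xi x y z s) (dxi x y z s)) (ddxi x y z s) = 0).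
  { rewrite circle_axis_dot_det3, dot_xi_ddxi by exact Hs.
    change (geod_curv x y z s + k * -1 = 0). lra. }
  assert (Hu := dot_dxi_dxi s Hs). assert (Huw := dot_dxi_ddxi s Hs).
  destruct (cross_xi_ddxi s Hs) as [_ Hw].
  destruct (circle_axis k (xi x y z s) (dxi x y z s)) as [[A1 A2] A3].
  unfold dxi, ddxi in *. cbn [dot snd] in *.
  apply Rnot_le_lt. intros HA3.
  assert (A1 = 0 /\ A2 = 0) as [-> ->] by (split; nra).
  assert (Hz' : Derive z s = 0) by nra.
  assert (Hz'' : Derive (Derive z) s = 0) by nra.
  rewrite Hz' in *. rewrite Hz'' in *.
  apply Hn, (horizontal_basis_orthogonal (Derive x s) (Derive y s)
                (Derive (Derive x) s) (Derive (Derive y) s)); nra.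
Qed.

End ArcLengthSphericalCurve.

Theorem corollary3p4 (k0 c : R) (a b : Rbar) (x y z : R -> R) :
  0 <= k0 ->
  Rabs c < sqrt (1 + k0 ^ 2) ->
  Rbar_lt a b ->
  arclength_spherical_curve a b x y z ->
  ((z_nowhere_locally_constant a b z /\
    (forall s, in_I a b s -> ang_mom x y z s = k0 * z s + c)) ->
   nonparallel_circle_of_curvature a b x y z k0) /\
  (nonparallel_circle_of_curvature a b x y z k0 ->
   exists c' : R, Rabs c' < sqrt (1 + k0 ^ 2) /\
     (forall s, in_I a b s -> ang_mom x y z s = k0 * z s + c')).
Proof.
  intros _ Hc Hab Hxi.
  destruct (in_I_nonempty a b Hab) as [s0 Hs0].
  set (A := circle_axis k0 (xi x y z s0) (dxi x y z s0)).
  assert (HA : (forall s, in_I a b s -> geod_curv x y z s = k0) ->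
               forall s, in_I a b s -> circle_axis k0 (xi x y z s) (dxi x y z s) = A)
    by (intros Hk s Hs; exact (circle_axis_const a b x y z Hxi k0 Hk s s0 Hs Hs0)).
  split.
  - intros [Hz HK].
    assert (Hk := curvature_eq_of_ang_mom_linear a b x y z Hxi k0 c Hz HK).
    split; [|exact Hk].
    destruct (circle_axis_dot_xi a b x y z Hxi k0 s0 Hs0) as [HAA _].
    assert (HA3 : snd A = - c).
    { assert (H := HK s0 Hs0). rewrite (ang_mom_circle_axis x y z k0) in H. fold A in H. lra. }
    assert (Hc2 : snd A ^ 2 < 1 + k0 ^ 2).
    { rewrite HA3. apply Rabs_lt_sqrt_iff. now rewrite Rabs_Ropp. }
    destruct (plane_of_axis k0 A HAA Hc2) as (n1 & n2 & n3 & d & Hn & Hd & Hnv & Hplane).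
    exists n1, n2, n3, d. repeat split; try assumption.
    intros t Ht. apply Hplane. rewrite <- (HA Hk t Ht).
    apply (circle_axis_dot_xi a b x y z Hxi k0 t Ht).
  - intros [(n1 & n2 & n3 & d & _ & _ & Hnv & Hplane) Hk].
    exists (- snd A). split.
    + apply Rabs_lt_sqrt_iff. replace ((- snd A) ^ 2) with (snd A ^ 2) by ring.
      exact (circle_axis_not_vertical a b x y z Hxi k0 n1 n2 n3 d s0 Hs0 (Hk s0 Hs0) Hnv Hplane).
    + intros s Hs. rewrite (ang_mom_circle_axis x y z k0 s), (HA Hk s Hs). ring.
Qed.
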